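(* Let $k\ge 3$, $k'=k-1$, and $A\in\mathcal{M}_d$. Let $\pi\in S_{2k'}$ be the cycle $\pi=(2k'\!-\!1\;\;2k'\!-\!2\;\cdots\;k'\!+\!1\;\;k')$. Then $$\operatorname{tr}_1\big[(1\,2\cdots k)^{T_k}(A\otimes\mathbb{1}^{\otimes(k-1)})\big]=\tau^{-1}\pi\,\tau\big(A\otimes\mathbb{1}^{\otimes(k-2)}\big).$$
   Context: $\mathcal{M}_d$ denotes complex $d\times d$ matrices; $\{|i\rangle\}$ is a fixed orthonormal basis of $\mathbb{C}^d$. A permutation $\sigma\in S_n$ acts on $(\mathbb{C}^d)^{\otimes n}$ by $\sigma|v_1\rangle\otimes\cdots\otimes|v_n\rangle=|v_{\sigma^{-1}(1)}\rangle\otimes\cdots\otimes|v_{\sigma^{-1}(n)}\rangle$; cycle notation $(a_1\,a_2\cdots a_r)$ means $a_1\to a_2\to\cdots\to a_r\to a_1$. $T_k$ is the partial transpose on the $k$-th factor in the basis $\{|i\rangle\}$; $\operatorname{tr}_1$ is the partial trace over the first factor. $\tau$ is the linear map from operators on $(\mathbb{C}^d)^{\otimes k'}$ to vectors in $(\mathbb{C}^d)^{\otimes 2k'}$ defined by $\tau(|i_1\dots i_{k'}\rangle\langle j_1\dots j_{k'}|)=|i_1\dots i_{k'}\rangle|j_1\dots j_{k'}\rangle$, and $\tau^{-1}$ is its inverse; thus $\tau^{-1}\pi\tau$ applies $\pi$ (acting on $(\mathbb{C}^d)^{\otimes 2k'}$) to the combined list of ket and bra indices. *)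

(* Operators on (C^d)^{(x) n} are represented by their
   matrix elements in the product basis |i_1 ... i_n>, indexed by
   multi-indices  i : {ffun 'I_n -> 'I_d}  (position m in 'I_n is the
   (m+1)-th tensor factor). Vectors in (C^d)^{(x) n} are their coordinate
   functions in the same basis. *)
From HB Require Import structures.
From mathcomp Require Import all_boot all_order all_algebra all_fingroup.
From mathcomp Require Export complex.
From mathcomp Require Export reals.
Set Implicit Arguments. Unset Strict Implicit. Unset Printing Implicit Defensive.
Import GRing.Theory.
Local Open Scope ring_scope.

Section Tensors.
Variables (C : comRingType) (d : nat).

Definition Idx n := {ffun 'I_n -> 'I_d}.
(* operators on (C^d)^{(x) n}:  X i j = <i| X |j> *)
Definition Op n := Idx n -> Idx n -> C.
Definition Vec n := Idx n -> C.

Definition icat m n (i : Idx m) (j : Idx n) : Idx (m + n) :=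
  [ffun x => match split x with inl a => i a | inr b => j b end].
Definition ileft m n (i : Idx (m + n)) : Idx m := [ffun a => i (lshift n a)].
Definition iright m n (i : Idx (m + n)) : Idx n := [ffun b => i (rshift m b)].
Definition icons n (a : 'I_d) (i : Idx n) : Idx n.+1 :=
  [ffun x => match unlift ord0 x with Some y => i y | None => a end].
Definition iset n (i : Idx n) (m : 'I_n) (a : 'I_d) : Idx n :=
  [ffun x => if x == m then a else i x].

Definition matop (A : 'M[C]_d) : Op 1 := fun i j => A (i ord0) (j ord0).
Definition idop n : Op n := fun i j => (i == j)%:R.
Definition tens m n (X : Op m) (Y : Op n) : Op (m + n) :=
  fun i j => X (ileft i) (ileft j) * Y (iright i) (iright j).
Definition mulop n (X Y : Op n) : Op n := fun i j => \sum_(l : Idx n) X i l * Y l j.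
Definition applyop n (X : Op n) (v : Vec n) : Vec n :=
  fun i => \sum_(j : Idx n) X i j * v j.
(* partial transpose on the factor m, in the basis {|i>} *)
Definition ptrans n (m : 'I_n) (X : Op n) : Op n :=
  fun i j => X (iset i m (j m)) (iset j m (i m)).
Definition ptr1 n (X : Op n.+1) : Op n :=
  fun i j => \sum_(a : 'I_d) X (icons a i) (icons a j).
(* tau(|i><j|) = |i>|j>, and its inverse *)
Definition tau n (X : Op n) : Vec (n + n) := fun v => X (ileft v) (iright v).
Definition tauinv n (v : Vec (n + n)) : Op n := fun i j => v (icat i j).

(* the permutation operator: sigma |v_1..v_n> = |v_{sigma^-1 1} .. v_{sigma^-1 n}>,
   so <j| sigma |i> = 1 iff j (sigma m) = i m for all positions m. *)
Definition permop n (s : {perm 'I_n}) : Op n :=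
  fun j i => [forall m, j (s m) == i m]%:R.
End Tensors.

(* cycle notation: for a duplicate-free list [a_1; ...; a_r] of positions,
   the permutation a_1 -> a_2 -> ... -> a_r -> a_1 (fixing everything else) *)
Definition cperm n (s : seq 'I_n) : {perm 'I_n} :=
  (if uniq s as b return (uniq s = b -> {perm 'I_n})
   then fun H => perm (can_inj (prev_next H)) else fun _ => 1%g) erefl.

(* the cycle (a_1 a_2 ... a_r) written with 1-based positions a_i in {1..n};
   position p corresponds to the ordinal p-1 of 'I_n *)
Definition cyc n (s : seq nat) : {perm 'I_n} :=
  cperm (pmap (fun p => insub p.-1) s).

From mathcomp Require Import all_boot all_algebra all_fingroup.
From mathcomp Require Import complex reals.
From mathcomp Require Import zify.
From Stdlib Require Import FunctionalExtensionality.
Set Implicit Arguments. Unset Strict Implicit. Unset Printing Implicit Defensive.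

(* Compare both sides entry by entry, reading a multi-index as the sequence of
   its entries ([codom]).  Write <x| = x0 :: tx ++ [xn] and |y> = ty ++ [y1; y2].
   On the left, the cycle (1 2 ... k) acts on a multi-index as the rotation
   [rot 1]; after transposing the last factor and tracing out the first, the
   only surviving term is A x0 xn, and it survives exactly when tx = ty and
   y1 = y2.  On the right, pi rotates the block of positions k', ..., 2k'-1 of
   |x>|y> one step to the right, which moves y1 in front of xn; splitting the
   result back into ket and bra gives x0 :: tx ++ [y1] and xn :: ty ++ [y2], so
   A (x) 1 contributes A x0 xn under the same condition. *)

Section MultiIndices.
Variable d : nat.

Lemma eq_codom_ffun n (i j : Idx d n) : (codom i == codom j) = (i == j).
Proof.
by apply/eqP/eqP => [e|-> //]; apply: (can_inj fgraphK); apply: val_inj.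
Qed.

Lemma codom_comp n (i : Idx d n) (s : 'I_n -> 'I_n) :
  codom [ffun m => i (s m)] = map i (map s (enum 'I_n)).
Proof. by rewrite -map_comp codomE; apply: eq_map => m; rewrite /= ffunE. Qed.

Lemma last_codom n (i : Idx d n.+1) a : last a (codom i) = i ord_max.
Proof. by rewrite codomE enum_ordSr map_rcons last_rcons. Qed.

Lemma icons_ord0 n a (i : Idx d n) : icons a i ord0 = a.
Proof. by rewrite ffunE unlift_none. Qed.

Lemma icons_lift n a (i : Idx d n) k : icons a i (lift ord0 k) = i k.
Proof. by rewrite ffunE liftK. Qed.

Lemma codom_icons n a (i : Idx d n) : codom (icons a i) = a :: codom i.
Proof.
rewrite !codomE enum_ordSl /= icons_ord0 -map_comp; congr (_ :: _).
by apply: eq_map => k; rewrite /= icons_lift.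
Qed.

Lemma ileft_icons n a (i : Idx d n) : @ileft d 1 n (icons a i) ord0 = a.
Proof. by rewrite ffunE (_ : lshift n ord0 = ord0) ?icons_ord0 //; apply: val_inj. Qed.

Lemma iright_icons n a (i : Idx d n) : @iright d 1 n (icons a i) = i.
Proof.
by apply/ffunP => k; rewrite ffunE -(icons_lift a i); congr (icons a i _); apply: val_inj.
Qed.

Lemma icons_eta n (l : Idx d n.+1) : icons (l ord0) (@iright d 1 n l) = l.
Proof.
apply/ffunP => k; rewrite ffunE; case: unliftP => [j ->|->] //.
by rewrite ffunE; congr (l _); apply: val_inj.
Qed.

Lemma enum_ord_add m n :
  enum 'I_(m + n) = map (lshift n) (enum 'I_m) ++ map (@rshift m n) (enum 'I_n).
Proof.
apply: (inj_map val_inj).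
rewrite map_cat val_enum_ord iotaD add0n -[in iota m n](addn0 m) iotaDl -!val_enum_ord.
by congr (_ ++ _); elim: (enum _) => //= k l ->.
Qed.

Lemma codom_icat m n (i : Idx d m) (j : Idx d n) : codom (icat i j) = codom i ++ codom j.
Proof.
rewrite !codomE enum_ord_add map_cat.
congr (_ ++ _); elim: (enum _) => //= k l ->.
  by rewrite ffunE (unsplitK (inl _ k)).
by rewrite ffunE (unsplitK (inr _ k)).
Qed.

Lemma icat_ileft_iright m n (i : Idx d (m + n)) : icat (ileft i) (iright i) = i.
Proof.
by apply/ffunP => k; rewrite ffunE; case: split_ordP => [a|b] ->; rewrite ffunE.
Qed.

Lemma codom_ileft m n (i : Idx d (m + n)) : codom (ileft i) = take m (codom i).
Proof.
by rewrite -{2}(icat_ileft_iright i) codom_icat take_size_cat // size_codom card_ord.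
Qed.

Lemma codom_iright m n (i : Idx d (m + n)) : codom (iright i) = drop m (codom i).
Proof.
by rewrite -{2}(icat_ileft_iright i) codom_icat drop_size_cat // size_codom card_ord.
Qed.

Lemma codom_iset_max n (i : Idx d n.+1) s e c :
  codom i = rcons s e -> codom (iset i ord_max c) = rcons s c.
Proof.
rewrite !codomE enum_ordSr !map_rcons ffunE eqxx => /rcons_inj[<- _].
congr rcons; rewrite -!map_comp; apply: eq_map => k /=.
by rewrite ffunE ifF // -val_eqE /= ltn_eqF.
Qed.

End MultiIndices.

Lemma map_next_cycle (T : eqType) (s : seq T) : uniq s -> map (next s) s = rot 1 s.
Proof.
case: s => // y s' us; rewrite rot1_cons.
apply: (@eq_from_nth _ y) => [|i]; rewrite size_map ?size_rcons // => lti.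
by rewrite (nth_map y) // next_nth mem_nth // index_uniq // nth_rcons_default.
Qed.

Lemma cpermE n (s : seq 'I_n) : uniq s -> cperm s =1 next s.
Proof.
move=> us x; rewrite /cperm; move: (erefl (uniq s)).
case: {2 3}(uniq s) => e; last by rewrite us in e.
by rewrite permE.
Qed.

Lemma map_next_rev_cycle (T : eqType) (s : seq T) :
  uniq s -> map (next (rev s)) s = rotr 1 s.
Proof.
by move=> us; rewrite -{2}(revK s) map_rev map_next_cycle ?rev_uniq // rev_rot revK.
Qed.

Lemma map_next_block (T : eqType) (c p s q : seq T) :
  uniq (p ++ s ++ q) -> c =i s -> map (next c) (p ++ s ++ q) = p ++ map (next c) s ++ q.
Proof.
rewrite uniq_catCA cat_uniq has_cat negb_or => /and3P[_ /andP[sp sq] _] cs.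
have fixed r : ~~ has (mem s) r -> map (next c) r = r.
  move=> /hasPn sr; apply: map_id_in => x /sr xs.
  by rewrite next_nth cs; case: ifP => // xs'; case/negP: xs.
by rewrite !map_cat (fixed p sp) (fixed q sq).
Qed.

Definition ord_segment N m k : seq 'I_N := take k (drop m (enum 'I_N)).

Lemma val_ord_segment N m k : m + k <= N -> map val (ord_segment N m k) = iota m k.
Proof.
move=> le_mkN; rewrite map_take map_drop val_enum_ord drop_iota take_iota.
by congr iota; lia.
Qed.

Lemma cyc_positions N (l : seq nat) (c : seq 'I_N) :
  all (fun p => 0 < p <= N) l -> map val c = map predn l -> cyc N l = cperm c.
Proof.
move=> lN lc; rewrite /cyc; congr cperm; apply: (inj_map val_inj); rewrite lc.
elim: l lN {lc} => //= p l IHl /andP[pN lN].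
by rewrite insubT /=; [lia | move=> ?; rewrite IHl].
Qed.

Lemma cyc_iota N m k : m + k <= N -> cyc N (iota m.+1 k) = cperm (ord_segment N m k).
Proof.
move=> le_mkN; apply: cyc_positions; first by apply/allP => p; rewrite mem_iota; lia.
by rewrite val_ord_segment //; elim: k m {le_mkN} => //= k IHk m; rewrite IHk.
Qed.

Lemma cyc_rev_iota N m k :
  m + k <= N -> cyc N (rev (iota m.+1 k)) = cperm (rev (ord_segment N m k)).
Proof.
move=> le_mkN; apply: cyc_positions; first by apply/allP => p; rewrite mem_rev mem_iota; lia.
rewrite !map_rev val_ord_segment //; congr rev.
by elim: k m {le_mkN} => //= k IHk m; rewrite IHk.
Qed.

Section CyclesOnMultiIndices.
Variables (d N m k : nat) (w : Idx d N) (p s q : seq 'I_d).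
Hypotheses (ew : codom w = p ++ s ++ q) (sp : size p = m) (ss : size s = k).

Let segment := ord_segment N m k.

Let le_mkN : m + k <= N.
Proof. by rewrite -sp -ss -(card_ord N) -(size_codom w) ew !size_cat addnA leq_addr. Qed.

Let enum_split : enum 'I_N = take m (enum 'I_N) ++ segment ++ drop k (drop m (enum 'I_N)).
Proof. by rewrite /segment /ord_segment !cat_take_drop. Qed.

Lemma codom_cperm_segment (c : seq 'I_N) : uniq c -> c =i segment ->
  codom [ffun x => w (cperm c x)] = p ++ map w (map (next c) segment) ++ q.
Proof.
move=> uc cseg; have cw : map w (enum 'I_N) = p ++ s ++ q by rewrite -codomE.
have ue : uniq (take m (enum 'I_N) ++ segment ++ drop k (drop m (enum 'I_N))).
  by rewrite -enum_split enum_uniq.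
rewrite codom_comp (eq_map (cpermE uc)) enum_split map_next_block // !map_cat.
congr (_ ++ _ ++ _); first by rewrite map_take cw take_size_cat.
by rewrite !map_drop cw drop_size_cat // drop_size_cat.
Qed.

Let uniq_segment : uniq segment.
Proof. by rewrite take_uniq // drop_uniq // enum_uniq. Qed.

Let map_segment : map w segment = s.
Proof.
by rewrite map_take map_drop -codomE ew drop_size_cat // take_size_cat.
Qed.

Lemma codom_cyc_iota : codom [ffun x => w (cyc N (iota m.+1 k) x)] = p ++ rot 1 s ++ q.
Proof.
by rewrite cyc_iota // codom_cperm_segment // map_next_cycle // map_rot map_segment.
Qed.

Lemma codom_cyc_rev_iota :
  codom [ffun x => w (cyc N (rev (iota m.+1 k)) x)] = p ++ rotr 1 s ++ q.
Proof.
rewrite cyc_rev_iota // codom_cperm_segment ?rev_uniq //; last exact: mem_rev.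
by rewrite map_next_rev_cycle // map_rotr map_segment.
Qed.

End CyclesOnMultiIndices.

Lemma codom_cyc_iota1 d N (w : Idx d N) :
  codom [ffun x => w (cyc N (iota 1 N) x)] = rot 1 (codom w).
Proof.
by rewrite (@codom_cyc_iota _ _ 0 N w [::] (codom w) [::]) ?cats0 // size_codom card_ord.
Qed.

Import GRing.Theory.
Local Open Scope ring_scope.

Section Operators.
Variables (C : comNzRingType) (d : nat).

Lemma sum_natr_eq_mull (T : finType) (c : T) (F : T -> C) :
  \sum_t (c == t)%:R * F t = F c.
Proof.
rewrite (bigD1 c) //= eqxx mul1r big1 ?addr0 // => t.
by rewrite eq_sym => /negbTE ->; rewrite mul0r.
Qed.

Lemma sum_icons m (F : Idx d m.+1 -> C) :
  \sum_l F l = \sum_(a : 'I_d) \sum_(i : Idx d m) F (icons a i).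
Proof.
rewrite pair_big /=; apply: (reindex (fun ai => icons ai.1 ai.2)).
exists (fun l : Idx d m.+1 => (l ord0, @iright d 1 m l)) => [[a i] _ | l _] /=.
  by rewrite icons_ord0 iright_icons.
exact: icons_eta.
Qed.

Lemma permopE n (s : {perm 'I_n}) (j i : Idx d n) :
  permop C s j i = ([ffun m => j (s m)] == i)%:R.
Proof.
rewrite /permop; congr (nat_of_bool _)%:R.
apply/forallP/eqP => [ji | <- m]; last by rewrite ffunE.
by apply/ffunP => m; rewrite ffunE; apply/eqP.
Qed.

Lemma applyop_permop n (s : {perm 'I_n}) (v : Vec C d n) i :
  applyop (permop C s) v i = v [ffun m => i (s m)].
Proof. by rewrite -sum_natr_eq_mull; apply: eq_bigr => j _; rewrite permopE. Qed.

Lemma tens_matop_icons m (A : 'M[C]_d) (Y : Op C d m) a b i j :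
  tens (matop A) Y (icons a i) (icons b j) = A a b * Y i j.
Proof. by rewrite /tens /matop !ileft_icons !iright_icons. Qed.

Lemma tens_matop_idop m (A : 'M[C]_d) (i j : Idx d m.+1) a b s t :
  codom i = a :: s -> codom j = b :: t ->
  tens (matop A) (@idop C d m) i j = A a b * (s == t)%:R.
Proof.
rewrite -(icons_eta i) -(icons_eta j) !codom_icons => -[-> <-] [-> <-].
by rewrite tens_matop_icons /idop eq_codom_ffun.
Qed.

Lemma ptr1_mulop_tens_idop m (X : Op C d m.+1) (A : 'M[C]_d) x y :
  ptr1 (mulop X (tens (matop A) (@idop C d m))) x y =
  \sum_(a : 'I_d) \sum_(b : 'I_d) X (icons a x) (icons b y) * A b a.
Proof.
apply: eq_bigr => a _; rewrite /mulop sum_icons; apply: eq_bigr => b _.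
rewrite (bigD1 y) //= tens_matop_icons /idop eqxx mulr1 big1 ?addr0 // => i /negbTE ne.
by rewrite tens_matop_icons /idop ne mulr0 mulr0.
Qed.

End Operators.

Section Proposition6.
Variables (C : comNzRingType) (d n : nat) (A : 'M[C]_d) (x y : Idx d n.+1).
Variables (x0 xn y1 y2 : 'I_d) (tx ty : seq 'I_d).
Hypotheses (ex : codom x = x0 :: rcons tx xn) (ey : codom y = rcons (rcons ty y1) y2).

Let size_tx : (size tx).+1 = n.
Proof. by have := size_codom x; rewrite ex card_ord /= size_rcons => -[]. Qed.

Let size_ty : (size ty).+1 = n.
Proof. by have := size_codom y; rewrite ey card_ord !size_rcons => -[]. Qed.

Lemma ptr1_ptrans_cycle :
  ptr1 (mulop (ptrans ord_max (permop C (cyc n.+2 (iota 1 n.+2))))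
              (tens (matop A) (@idop C d n.+1))) x y
  = A x0 xn * ((tx == ty) && (y2 == y1))%:R.
Proof.
have ptrans_entry a b :
    ptrans ord_max (permop C (cyc n.+2 (iota 1 n.+2))) (icons a x) (icons b y)
    = [&& x0 == b, (tx == ty) && (y2 == y1) & a == xn]%:R.
  have exa : codom (icons a x) = rcons (a :: x0 :: tx) xn by rewrite codom_icons ex.
  have eyb : codom (icons b y) = rcons (b :: rcons ty y1) y2 by rewrite codom_icons ey.
  rewrite /ptrans permopE -eq_codom_ffun codom_cyc_iota1.
  rewrite -(last_codom (icons a x) a) -(last_codom (icons b y) b) exa eyb !last_rcons.
  rewrite (codom_iset_max _ exa) (codom_iset_max _ eyb) rot1_cons.
  by rewrite eqseq_rcons eqseq_cons eqseq_rcons -andbA.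
rewrite ptr1_mulop_tens_idop.
under eq_bigr => a _ do under eq_bigr => b _ do rewrite ptrans_entry.
rewrite (bigD1 xn) //= [X in _ + X]big1 ?addr0; last first.
  by move=> a /negbTE neq; apply: big1 => b _; rewrite neq !andbF mul0r.
rewrite (bigD1 x0) //= big1 ?addr0; last first.
  by move=> b /negbTE neq; rewrite eq_sym neq mul0r.
by rewrite !eqxx andbT mulrC.
Qed.

Lemma tauinv_cycle_tau :
  tauinv (applyop (permop C (cyc (n.+1 + n.+1) (rev (iota n.+1 n.+1))))
                  (tau (tens (matop A) (@idop C d n)))) x y
  = A x0 xn * ((tx == ty) && (y1 == y2))%:R.
Proof.
rewrite /tauinv applyop_permop /tau; set v := [ffun m => _].
have exy : codom (icat x y) = (x0 :: tx) ++ (xn :: rcons ty y1) ++ [:: y2].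
  by rewrite codom_icat ex ey -!cats1 /= -!catA.
have ev : codom v = (x0 :: rcons tx y1) ++ (xn :: rcons ty y2).
  rewrite (codom_cyc_rev_iota exy) /= ?size_rcons ?size_tx ?size_ty //.
  by rewrite -rcons_cons rotr1_rcons -!cats1 /= -!catA.
rewrite (tens_matop_idop A (a := x0) (b := xn) (s := rcons tx y1) (t := rcons ty y2)).
- by rewrite eqseq_rcons.
- by rewrite codom_ileft ev take_size_cat //= size_rcons size_tx.
- by rewrite codom_iright ev drop_size_cat //= size_rcons size_tx.
Qed.

End Proposition6.

Theorem proposition6 (R : realType) (d n : nat) (A : 'M[R[i]]_d) :
  (1 <= n)%N ->
  @ptr1 R[i] d n.+1
    (@mulop R[i] d n.+2
       (@ptrans R[i] d n.+2 ord_max (@permop R[i] d n.+2 (cyc n.+2 (iota 1 n.+2))))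
       (@tens R[i] d 1 n.+1 (matop A) (@idop R[i] d n.+1)))
  = @tauinv R[i] d n.+1
      (@applyop R[i] d (n.+1 + n.+1)
         (@permop R[i] d (n.+1 + n.+1) (cyc (n.+1 + n.+1) (rev (iota n.+1 n.+1))))
         (@tau R[i] d n.+1 (@tens R[i] d 1 n (matop A) (@idop R[i] d n)))).
Proof.
move=> n_gt0; apply: functional_extensionality => x; apply: functional_extensionality => y.
have [x0 [tx [xn ex]]] : exists x0 tx xn, codom x = x0 :: rcons tx xn.
  move: (size_codom x); rewrite card_ord; case: (codom x) => [|x0 s] //= [].
  by case/lastP: s => [|tx xn] => [n0 | _]; [rewrite -n0 in n_gt0 | exists x0, tx, xn].
have [ty [y1 [y2 ey]]] : exists ty y1 y2, codom y = rcons (rcons ty y1) y2.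
  move: (size_codom y); rewrite card_ord; case/lastP: (codom y) => [|s y2] //.
  rewrite size_rcons => -[].
  by case/lastP: s => [|ty y1] => [n0 | _]; [rewrite -n0 in n_gt0 | exists ty, y1, y2].
by rewrite (ptr1_ptrans_cycle A ex ey) (tauinv_cycle_tau A ex ey) [y1 == y2]eq_sym.
Qed.
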